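(* Let $U$ be a finite set, $(T,I,N)$ an IMTL triplet, $\widetilde{R}$ a $T$-preorder relation on $U$, and $A\subseteq U$ a crisp set (identified with its indicator fuzzy set), $coA=U\setminus A$. Let $L:\mathbb{R}\times\mathbb{R}\to\mathbb{R}^+$ be a loss function that is of $\lor$-type, $N$-duality preserving and symmetric. Consider problem (P1): $$\text{minimize }\sum_{u\in U}L(A(u),\hat{A}(u))\ \text{ s.t. } T(\widetilde{R}(u,v),\hat{A}(v))\le\hat{A}(u)\ (u,v\in U),\ 0\le\hat{A}(u)\le1,$$ and problem (P2) in variables $(\beta_u)_{u\in U}$: $$\text{minimize }\sum_{u\in U}L(1,\beta_u)\ \text{ s.t. } T(\beta_u,\beta_v)\le N(\widetilde{R}(v,u))\ (u\in A,\ v\in coA),\ 0\le\beta_u\le1\ (u\in U).$$ Under the correspondence $\beta_u=\hat{A}(u)$ for $u\in A$ and $\beta_u=N(\hat{A}(u))$ for $u\in coA$, problems (P1) and (P2) are equivalent: they have the same optimal value, and $\hat{A}$ is an optimal solution of (P1) if and only if the corresponding $\beta$ is an optimal solution of (P2).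
   Context: A residual triplet $(T,I,N)$ consists of a left-continuous $t$-norm $T$, its residual implicator $I(x,y)=\sup\{\beta\in[0,1]: T(x,\beta)\le y\}$ and $N(x)=I(x,0)$; it is IMTL if $N$ is involutive. $\widetilde{R}:U\times U\to[0,1]$ is a $T$-preorder if reflexive and $T$-transitive. A loss function $L$ is of $\lor$-type if for every real $a$: $L(a,a)=0$; $x\mapsto L(x,a)$ and $x\mapsto L(a,x)$ are increasing for $x>a$ and decreasing for $x<a$. $L$ is symmetric if $L(y,\hat y)=L(\hat y,y)$, and $N$-duality preserving if $L(y,\hat y)=L(N(\hat y),N(y))$ for all $y,\hat y\in[0,1]$. *)

From HB Require Import structures.
From mathcomp Require Import all_boot all_order all_algebra.
From mathcomp Require Import classical_sets reals.
Set Implicit Arguments. Unset Strict Implicit. Unset Printing Implicit Defensive.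
Import Order.TTheory GRing.Theory Num.Theory.
Local Open Scope ring_scope.
Local Open Scope classical_set_scope.

Section Fuzzy.
Variable R : realType.

Definition in01 (x : R) : Prop := 0 <= x <= 1.

(* t-norm on [0,1] (values outside [0,1] are irrelevant) *)
Definition is_tnorm (T : R -> R -> R) : Prop :=
  [/\ (forall x y, in01 x -> in01 y -> in01 (T x y)),
      (forall x y, in01 x -> in01 y -> T x y = T y x),
      (forall x y z, in01 x -> in01 y -> in01 z -> T x (T y z) = T (T x y) z),
      (forall x x' y y', in01 x -> in01 x' -> in01 y -> in01 y' ->
          x <= x' -> y <= y' -> T x y <= T x' y') &
      (forall x, in01 x -> T x 1 = x)].

(* left-continuity (in the first argument; by commutativity in both) *)
Definition left_continuous (T : R -> R -> R) : Prop :=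
  forall y x, in01 y -> 0 < x <= 1 ->
  forall e, 0 < e -> exists2 d, 0 < d &
    forall z, 0 <= z -> x - d < z -> z <= x -> `|T z y - T x y| < e.

Definition resid (T : R -> R -> R) (x y : R) : R :=
  sup [set b | in01 b /\ T x b <= y].

Definition negation (T : R -> R -> R) (x : R) : R := resid T x 0.

Definition IMTL (T : R -> R -> R) : Prop :=
  [/\ is_tnorm T, left_continuous T &
      forall x, in01 x -> negation T (negation T x) = x].

Definition T_preorder (U : Type) (T : R -> R -> R) (Rr : U -> U -> R) : Prop :=
  [/\ (forall u v, in01 (Rr u v)),
      (forall u, Rr u u = 1) &
      (forall u v w, T (Rr u v) (Rr v w) <= Rr u w)].

Definition vee_type (L : R -> R -> R) : Prop :=
  forall a, [/\ L a a = 0,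
    (forall x y, a < x -> x < y -> L x a < L y a),
    (forall x y, x < y -> y < a -> L y a < L x a),
    (forall x y, a < x -> x < y -> L a x < L a y) &
    (forall x y, x < y -> y < a -> L a y < L a x)].

Definition symmetric_loss (L : R -> R -> R) : Prop :=
  forall y yh, L y yh = L yh y.

Definition N_duality_preserving (T : R -> R -> R) (L : R -> R -> R) : Prop :=
  forall y yh, in01 y -> in01 yh ->
    L y yh = L (negation T yh) (negation T y).

Variable U : finType.

Definition indic (A : {set U}) (u : U) : R := if u \in A then 1 else 0.

Definition feas1 (T : R -> R -> R) (Rr : U -> U -> R) (Ah : U -> R) : Prop :=
  (forall u v, T (Rr u v) (Ah v) <= Ah u) /\ (forall u, in01 (Ah u)).
Definition obj1 (L : R -> R -> R) (A : {set U}) (Ah : U -> R) : R :=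
  \sum_(u : U) L (indic A u) (Ah u).
Definition optimal1 T Rr L A (Ah : U -> R) : Prop :=
  feas1 T Rr Ah /\ forall Ah', feas1 T Rr Ah' -> obj1 L A Ah <= obj1 L A Ah'.
Definition value1 T Rr L A : R :=
  inf [set r | exists Ah, feas1 T Rr Ah /\ r = obj1 L A Ah].

Definition feas2 (T : R -> R -> R) (Rr : U -> U -> R) (A : {set U})
    (b : U -> R) : Prop :=
  (forall u v, u \in A -> v \notin A -> T (b u) (b v) <= negation T (Rr v u))
  /\ (forall u, in01 (b u)).
Definition obj2 (L : R -> R -> R) (b : U -> R) : R :=
  \sum_(u : U) L 1 (b u).
Definition optimal2 T Rr L A (b : U -> R) : Prop :=
  feas2 T Rr A b /\ forall b', feas2 T Rr A b' -> obj2 L b <= obj2 L b'.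
Definition value2 T Rr L A : R :=
  inf [set r | exists b, feas2 T Rr A b /\ r = obj2 L b].

Definition corr (T : R -> R -> R) (A : {set U}) (Ah : U -> R) : U -> R :=
  fun u => if u \in A then Ah u else negation T (Ah u).

End Fuzzy.

From HB Require Import structures.
From mathcomp Require Import all_boot all_order all_algebra.
From mathcomp Require Import classical_sets reals boolp.
From mathcomp Require Import lra.
Import Order.TTheory GRing.Theory Num.Theory.
Local Open Scope ring_scope.
Local Open Scope classical_set_scope.
Set Implicit Arguments. Unset Strict Implicit.

(* The substitution [corr] is an involution, because [N] is, and it carries
   the loss of (P1) to the loss of (P2) by N-duality and symmetry of [L].  By
   residuation it turns the (P2) constraint between [u \in A] and [v \notin A]
   into the (P1) constraint [T (Rr v u) (Ah u) <= Ah v].  The other (P1)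
   constraints are restored by replacing [Ah] with its closure
   [w |-> max_(x in A) T (Rr w x) (Ah x)]: it is (P1)-feasible by
   T-transitivity, and it moves [Ah] towards 1 on [A] and towards 0 off [A], so
   it does not increase a vee-type loss, and strictly decreases it unless [Ah]
   was already closed. *)

Lemma in01_0 (R : realType) : in01 (0 : R). Proof. by rewrite /in01 lexx ler01. Qed.
Lemma in01_1 (R : realType) : in01 (1 : R). Proof. by rewrite /in01 lexx ler01. Qed.

Lemma inf_eq_of_cofinal (R : realType) (S1 S2 : set R) :
  has_lbound S2 -> S1 !=set0 ->
  (forall x, S1 x -> exists2 y, S2 y & y <= x) ->
  (forall y, S2 y -> exists2 x, S1 x & x <= y) ->
  inf S1 = inf S2.
Proof.
move=> S2_lb [x0 S1x0] S1S2 S2S1; have [m m_lb] := S2_lb.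
have S2_ne : S2 !=set0 by have [y S2y _] := S1S2 _ S1x0; exists y.
have S1_lb : has_lbound S1.
  by exists m => x /S1S2[y /m_lb my yx]; apply: le_trans yx.
apply/le_anti/andP; split.
- apply: lb_le_inf S2_ne _ => y /S2S1[x S1x xy].
  exact: le_trans (ge_inf S1_lb S1x) xy.
- apply: lb_le_inf => [|x /S1S2[y S2y yx]]; first by exists x0.
  exact: le_trans (ge_inf S2_lb S2y) yx.
Qed.

Section TNorm.
Variables (R : realType) (T : R -> R -> R).
Hypothesis tnT : is_tnorm T.

Lemma tnormx0 x : in01 x -> T x 0 = 0.
Proof.
have [Tin Tc _ Tmono T1] := tnT; move=> x01.
have [i0 i1] := (in01_0 R, in01_1 R).
have := Tmono _ _ _ _ x01 i1 i0 i0 (proj2 (andP x01)) (lexx 0).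
rewrite [T 1 0]Tc // T1 // => Tx0_le0.
by apply/le_anti; rewrite Tx0_le0; case/andP: (Tin _ _ x01 i0).
Qed.

Lemma tnorm1x x : in01 x -> T 1 x = x.
Proof. by have [_ Tc _ _ T1] := tnT; move=> x01; rewrite Tc ?T1 //; exact: in01_1. Qed.

Lemma has_sup_resid x z : in01 x -> 0 <= z ->
  has_sup [set b | in01 b /\ T x b <= z].
Proof.
move=> x01 z_ge0; split; first by exists 0; split; [exact: in01_0 | rewrite tnormx0].
by exists 1 => b [/andP[_ ->]].
Qed.

Lemma resid_in01 x z : in01 x -> 0 <= z -> in01 (resid T x z).
Proof.
move=> x01 z_ge0; have [ne ub] := has_sup_resid x01 z_ge0.
rewrite /resid; apply/andP; split.
  by apply: (ub_le_sup ub); split; [exact: in01_0 | rewrite tnormx0].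
by apply: ge_sup ne _ => b [/andP[_ ->]].
Qed.

Lemma resid0x z : 0 <= z -> resid T 0 z = 1.
Proof.
move=> z_ge0; apply/le_anti/andP; split.
  by case/andP: (resid_in01 (in01_0 R) z_ge0).
apply: (ub_le_sup (has_sup_resid (in01_0 R) z_ge0).2).
by split; [exact: in01_1 | case: tnT => _ _ _ _ ->; last exact: in01_0].
Qed.

Hypothesis lcT : left_continuous T.

Lemma resid_adjoint x y z : in01 x -> in01 y -> 0 <= z ->
  (T x y <= z) <-> (y <= resid T x z).
Proof.
have [Tin Tc _ Tmono _] := tnT; move=> x01 y01 z_ge0.
have supS := has_sup_resid x01 z_ge0.
split=> [Txy_le | y_le]; first exact: (ub_le_sup supS.2).
have [->|y_neq0] := eqVneq y 0; first by rewrite tnormx0.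
have y_pos : 0 < y <= 1 by rewrite lt_neqAle eq_sym y_neq0; case/andP: y01 => -> ->.
rewrite leNgt; apply/negP => z_lt.
have e_gt0 : 0 < T x y - z by rewrite subr_gt0.
have [d d_gt0 near_y] := lcT x01 y_pos e_gt0.
have [s [s01 Txs_le] s_gt] := sup_adherent d_gt0 supS.
have [ys | sy] := leP y s.
  have := Tmono _ _ _ _ x01 x01 y01 s01 (lexx x) ys.
  by move=> /le_trans /(_ Txs_le); rewrite leNgt z_lt.
have ys_d : y - d < s by apply: le_lt_trans s_gt; rewrite lerD2r.
have := near_y s (proj1 (andP s01)) ys_d (ltW sy).
rewrite Tc // [T y x]Tc // ltr_norml => /andP[? ?]; lra.
Qed.

Hypothesis NK : forall x, in01 x -> negation T (negation T x) = x.

(* Both sides are equivalent to [T (T r a) (N c) <= 0]. *)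
Lemma tnorm_negation_exchange a c r : in01 a -> in01 c -> in01 r ->
  (T a (negation T c) <= negation T r) <-> (T r a <= c).
Proof.
have [Tin Tc Tassoc _ _] := tnT; move=> a01 c01 r01.
have Nc01 := resid_in01 c01 (lexx 0).
have Tra01 := Tin _ _ r01 a01.
have NNc : resid T (resid T c 0) 0 = c := NK c01.
rewrite -(resid_adjoint r01 (Tin _ _ a01 Nc01) (lexx 0)) Tassoc //.
by rewrite -(Tc _ _ Nc01 Tra01) (resid_adjoint Nc01 Tra01 (lexx 0)) NNc.
Qed.

End TNorm.

Section VeeLoss.
Variables (R : realType) (L : R -> R -> R).
Hypotheses (L_ge0 : forall a b, 0 <= L a b) (veeL : vee_type L).

Lemma vee_loss_lt_right a x y : a <= x -> x < y -> L a x < L a y.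
Proof.
move=> ax xy; have [Laa _ _ L_incr _] := veeL a.
have [<-|a_neq_x] := eqVneq a x; last by apply: L_incr; rewrite // lt_neqAle a_neq_x.
rewrite Laa; apply: le_lt_trans (L_ge0 a ((a + y) / 2)) (L_incr _ _ _ _); lra.
Qed.

Lemma vee_loss_lt_left a x y : x <= a -> y < x -> L a x < L a y.
Proof.
move=> xa yx; have [Laa _ _ _ L_decr] := veeL a.
have [->|x_neq_a] := eqVneq x a; last by apply: L_decr; rewrite // lt_neqAle x_neq_a.
rewrite Laa; apply: le_lt_trans (L_ge0 a ((a + y) / 2)) (L_decr _ _ _ _); lra.
Qed.

Lemma vee_loss_leif a x y : (a <= x <= y) || (y <= x <= a) ->
  L a x <= L a y ?= iff (x == y).
Proof.
move=> between; apply/leifP; have [-> //|x_neq_y] := eqVneq x y.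
case/orP: between => /andP[ax xy].
  by apply: vee_loss_lt_right; rewrite // lt_neqAle x_neq_y.
by apply: vee_loss_lt_left; rewrite // lt_neqAle eq_sym x_neq_y.
Qed.

End VeeLoss.

Section Closure.
Variables (R : realType) (U : finType) (T : R -> R -> R) (Rr : U -> U -> R).
Variables (A : {set U}).
Hypotheses (tnT : is_tnorm T) (preR : T_preorder T Rr).

Definition cross_closed (Ah : U -> R) : Prop :=
  forall v u, v \notin A -> u \in A -> T (Rr v u) (Ah u) <= Ah v.

Definition closure_from (Ah : U -> R) (w : U) : R :=
  \big[Order.max/0]_(x in A) T (Rr w x) (Ah x).

Variable Ah : U -> R.
Hypothesis Ah01 : forall u, in01 (Ah u).

Lemma closure_from_in01 w : in01 (closure_from Ah w).
Proof.
have [Tin _ _ _ _] := tnT; have [Rin _ _] := preR.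
apply: (big_ind (fun m => in01 m)); first exact: in01_0.
  move=> m1 m2 /andP[m1_ge0 m1_le1] /andP[_ m2_le1].
  by rewrite /in01 le_max ge_max m1_ge0 m1_le1 m2_le1.
by move=> x _; apply: Tin.
Qed.

Lemma feas1_closure_from : feas1 T Rr (closure_from Ah).
Proof.
split=> [u v|]; last exact: closure_from_in01.
have [Tin _ Tassoc Tmono _] := tnT; have [Rin _ Rtrans] := preR.
pose P m := in01 m /\ T (Rr u v) m <= closure_from Ah u.
suff [] : P (closure_from Ah v) by [].
apply: (big_ind P) => [|m1 m2 Pm1 Pm2|x xA].
- split; first exact: in01_0.
  by rewrite tnormx0 //; case/andP: (closure_from_in01 u).
- by case: leP.
- split; first exact: Tin.
  rewrite Tassoc //; apply: bigmax_sup xA _.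
  by apply: Tmono => //; apply: Tin.
Qed.

Lemma closure_from_ge w : w \in A -> Ah w <= closure_from Ah w.
Proof.
have [_ Rrefl _] := preR; move=> wA.
by apply: bigmax_sup wA _; rewrite Rrefl tnorm1x.
Qed.

Lemma closure_from_le w : cross_closed Ah -> w \notin A ->
  closure_from Ah w <= Ah w.
Proof.
move=> closedAh wNA; apply: bigmax_le => [|x xA]; last exact: closedAh.
by case/andP: (Ah01 w).
Qed.

End Closure.

Section Equivalence.
Variables (R : realType) (U : finType) (T : R -> R -> R) (Rr : U -> U -> R).
Variables (A : {set U}) (L : R -> R -> R).
Hypotheses (imtlT : IMTL T) (preR : T_preorder T Rr).
Hypotheses (L_ge0 : forall a b, 0 <= L a b) (veeL : vee_type L).
Hypotheses (dualL : N_duality_preserving T L) (symL : symmetric_loss L).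

Let tnT : is_tnorm T. Proof. by case: imtlT. Qed.

Lemma corr_in01 Ah : (forall u, in01 (Ah u)) -> forall u, in01 (corr T A Ah u).
Proof. by move=> Ah01 u; rewrite /corr; case: ifP => _ //; exact: resid_in01. Qed.

Lemma corrK Ah : (forall u, in01 (Ah u)) -> corr T A (corr T A Ah) = Ah.
Proof.
have [_ _ NK] := imtlT; move=> Ah01; apply: funext => u.
by rewrite /corr; case: (u \in A) => //; rewrite NK.
Qed.

Lemma feas2_corrE Ah : (forall u, in01 (Ah u)) ->
  feas2 T Rr A (corr T A Ah) <-> cross_closed T Rr A Ah.
Proof.
have [_ lcT NK] := imtlT; have [Rin _ _] := preR; move=> Ah01.
have exchange u v : u \in A -> v \notin A ->
    T (corr T A Ah u) (corr T A Ah v) <= negation T (Rr v u) <->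
    T (Rr v u) (Ah u) <= Ah v.
  move=> uA vNA; rewrite /corr uA (negbTE vNA).
  exact: (tnorm_negation_exchange tnT lcT NK (Ah01 u) (Ah01 v) (Rin v u)).
split=> [[feas _] v u vNA uA | closedAh]; first exact/exchange/feas.
by split=> [u v uA vNA|]; [apply/exchange/closedAh | exact: corr_in01].
Qed.

Lemma feas2_corr Ah : feas1 T Rr Ah -> feas2 T Rr A (corr T A Ah).
Proof. by move=> [feas Ah01]; apply/feas2_corrE => // v u _ _; apply: feas. Qed.

Lemma obj1_corr Ah : (forall u, in01 (Ah u)) -> obj1 L A Ah = obj2 L (corr T A Ah).
Proof.
have N0 : negation T 0 = 1 := resid0x tnT (lexx 0).
move=> Ah01; apply: eq_bigr => u _; rewrite /indic /corr; case: ifP => // _.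
by rewrite dualL ?N0 1?symL //; exact: in01_0.
Qed.

Lemma obj1_closure_from_leif Ah : (forall u, in01 (Ah u)) -> cross_closed T Rr A Ah ->
  obj1 L A (closure_from T Rr A Ah) <= obj1 L A Ah
    ?= iff [forall u, closure_from T Rr A Ah u == Ah u].
Proof.
move=> Ah01 closedAh; apply: leif_sum => u _; apply: vee_loss_leif => //.
have /andP[cl_ge0 cl_le1] := closure_from_in01 A tnT preR Ah01 u.
rewrite /indic; case: ifP => uA.
  by rewrite cl_le1 closure_from_ge ?orbT.
by rewrite cl_ge0 closure_from_le ?uA.
Qed.

Lemma feas1_closure_corr b : feas2 T Rr A b ->
  feas1 T Rr (closure_from T Rr A (corr T A b)) /\
  obj1 L A (closure_from T Rr A (corr T A b)) <= obj2 L b.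
Proof.
move=> b_feas; have corr01 := corr_in01 b_feas.2.
split; first exact: feas1_closure_from.
have closed : cross_closed T Rr A (corr T A b).
  by rewrite -feas2_corrE // corrK //; exact: b_feas.2.
rewrite -[in obj2 L b](corrK b_feas.2) -obj1_corr //.
exact: leif_le (obj1_closure_from_leif corr01 closed).
Qed.

Lemma optimal2_corr_feas1 Ah : (forall u, in01 (Ah u)) ->
  optimal2 T Rr L A (corr T A Ah) -> feas1 T Rr Ah.
Proof.
move=> Ah01 [corr_feas corr_min].
have closedAh : cross_closed T Rr A Ah by rewrite -feas2_corrE.
have cl_feas := feas1_closure_from A tnT preR Ah01.
have cl_leif := obj1_closure_from_leif Ah01 closedAh.
have Ah_le_cl : obj1 L A Ah <= obj1 L A (closure_from T Rr A Ah).
  by rewrite !obj1_corr //; [apply/corr_min/feas2_corr | exact: cl_feas.2].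
have /forallP cl_eq : [forall u, closure_from T Rr A Ah u == Ah u].
  by rewrite -(eq_leif cl_leif) eq_le (leif_le cl_leif) Ah_le_cl.
by have <- : closure_from T Rr A Ah = Ah by apply: funext => u; apply/eqP.
Qed.

Lemma feas1_const1 : feas1 T Rr (fun=> 1).
Proof.
have [_ _ _ _ T1] := tnT; have [Rin _ _] := preR.
by split=> [u v|u]; [rewrite T1 //; case/andP: (Rin u v) | exact: in01_1].
Qed.

Lemma value1_eq_value2 : value1 T Rr L A = value2 T Rr L A.
Proof.
apply: inf_eq_of_cofinal.
- by exists 0 => _ [b [_ ->]]; apply: sumr_ge0.
- by exists (obj1 L A (fun=> 1)), (fun=> 1); split=> //; exact: feas1_const1.
- move=> _ [Ah [Ah_feas ->]]; exists (obj2 L (corr T A Ah)); last first.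
    by rewrite obj1_corr //; exact: Ah_feas.2.
  by exists (corr T A Ah); split=> //; exact: feas2_corr.
- move=> _ [b [b_feas ->]].
  have [cl_feas cl_le] := feas1_closure_corr b_feas.
  set cl := closure_from T Rr A (corr T A b) in cl_feas cl_le *.
  by exists (obj1 L A cl) => //; exists cl.
Qed.

Lemma optimal1_corrE Ah : (forall u, in01 (Ah u)) ->
  optimal1 T Rr L A Ah <-> optimal2 T Rr L A (corr T A Ah).
Proof.
move=> Ah01; split=> [[Ah_feas Ah_min] | Ah_opt2].
- split=> [|b /feas1_closure_corr[cl_feas cl_le]]; first exact: feas2_corr.
  by rewrite -obj1_corr //; apply: le_trans (Ah_min _ cl_feas) cl_le.
- have Ah_feas := optimal2_corr_feas1 Ah01 Ah_opt2.
  split=> // Ah' Ah'_feas; rewrite !obj1_corr //; last exact: Ah'_feas.2.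
  by apply: Ah_opt2.2; exact: feas2_corr.
Qed.

End Equivalence.

Theorem proposition8 (R : realType) (U : finType) (T : R -> R -> R)
    (Rr : U -> U -> R) (A : {set U}) (L : R -> R -> R) :
  IMTL T -> T_preorder T Rr ->
  (forall a b, 0 <= L a b) -> vee_type L ->
  N_duality_preserving T L -> symmetric_loss L ->
  value1 T Rr L A = value2 T Rr L A /\
  (forall Ah : U -> R, (forall u, in01 (Ah u)) ->
     (optimal1 T Rr L A Ah <-> optimal2 T Rr L A (corr T A Ah))).
Proof.
move=> imtlT preR L_ge0 veeL dualL symL.
by split=> [|Ah]; [exact: value1_eq_value2 | exact: optimal1_corrE].
Qed.
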